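(* Let $G$ be a group with bounded centralizer sequences. Then $[g_1,g_2]=g_1g_2g_1^{-1}g_2^{-1}$ is a weak identity in $G$.
   Context: A group $G$ has bounded centralizer sequences if there is an integer $N$ such that for every chain of subsets $P_1\subset P_2\subset\dots\subset P_N$ of $G$ with each $P_i$ consisting of mutually commuting elements, the chain of centralizers $C_G(P_1)\supseteq C_G(P_2)\supseteq\dots\supseteq C_G(P_N)$ is not strictly decreasing. Let $F$ be the free group on countably many generators $g_1,g_2,\dots$. For $N\ge1$, $F^{\times N}$ is the direct product of $N$ copies of $F$, $i_k:F\to F^{\times N}$ the $k$-th inclusion. An element $f\in F$ is a weak identity in $G$ if there exists $N\ge1$ such that for every homomorphism $\rho:F^{\times N}\to G$ there is $k\in\{1,\dots,N\}$ with $\rho(i_k(f))=1$. *)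

From mathcomp Require Import all_boot.
From mathcomp Require Export monoid.

Set Implicit Arguments.
Unset Strict Implicit.
Unset Printing Implicit Defensive.

Local Open Scope group_scope.

Definition centralizer (G : groupType) (P : G -> Prop) : G -> Prop :=
  fun g => forall p, P p -> g * p = p * g.

Definition mutually_commuting (G : groupType) (P : G -> Prop) : Prop :=
  forall x y, P x -> P y -> x * y = y * x.

Definition bounded_centralizer_sequences (G : groupType) : Prop :=
  exists N : nat, forall P : nat -> (G -> Prop),
    (forall i, i < N -> mutually_commuting (P i)) ->
    (forall i, i.+1 < N -> forall x, P i x -> P i.+1 x) ->
    ~ (forall i, i.+1 < N ->
         (forall g, centralizer (P i.+1) g -> centralizer (P i) g) /\
         (exists g, centralizer (P i) g /\ ~ centralizer (P i.+1) g)).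

(* A letter (n, true) is the generator g_(n+1), (n, false) its inverse. *)
Definition letter := (nat * bool)%type.

Definition cancels (a b : letter) : bool := (a.1 == b.1) && (a.2 != b.2).

Definition reduced (w : seq letter) : bool := sorted (fun a b => ~~ cancels a b) w.

Definition FreeGroup := {w : seq letter | reduced w}.

Definition push (a : letter) (w : seq letter) : seq letter :=
  match w with
  | b :: w' => if cancels a b then w' else a :: w
  | [::] => [:: a]
  end.

Lemma push_reduced a w : reduced w -> reduced (push a w).
Proof.
case: w => [|b w] //= Hw.
case: ifP => Hab; first exact: (path_sorted Hw).
by rewrite /= Hab.
Qed.

Definition normalize (w : seq letter) : seq letter := foldr push [::] w.

Lemma normalize_reduced w : reduced (normalize w).
Proof. by elim: w => [|a w IH] //=; apply: push_reduced. Qed.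

Definition fmul (u v : FreeGroup) : FreeGroup :=
  exist _ (normalize (val u ++ val v)) (normalize_reduced _).

Definition fone : FreeGroup := exist _ [::] isT.

Definition comm_g1g2 : FreeGroup :=
  exist _ [:: (0%N, true); (1%N, true); (0%N, false); (1%N, false)] isT.

Definition FreePow (N : nat) := 'I_N -> FreeGroup.

Definition pow_mul N (a b : FreePow N) : FreePow N := fun j => fmul (a j) (b j).

Definition incl N (k : 'I_N) (f : FreeGroup) : FreePow N :=
  fun j => if j == k then f else fone.

Definition is_hom (G : groupType) N (rho : FreePow N -> G) : Prop :=
  forall a b, rho (pow_mul a b) = rho a * rho b.

Definition weak_identity (G : groupType) (f : FreeGroup) : Prop :=
  exists N : nat, 0 < N /\
    forall rho : FreePow N -> G, is_hom rho ->
      exists k : 'I_N, rho (incl k f) = 1.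

(** The images [a_k], [b_k] of [g_1], [g_2] under the [k]-th inclusion
    commute with everything in the other coordinates.  If the commutator
    survived in every coordinate, the sets [{a_j | j < i}] would consist of
    commuting elements and their centralizers would strictly decrease with
    [i], the element [b_i] lying in the [i]-th but not the [(i+1)]-st one;
    a long enough product [F^{x N}] contradicts the bound on such chains. *)

From mathcomp Require Import all_boot.
From mathcomp Require Import monoid.
From Stdlib Require Import Classical FunctionalExtensionality.

Set Implicit Arguments.
Unset Strict Implicit.
Unset Printing Implicit Defensive.
Local Open Scope group_scope.

Lemma bounded_centralizer_sequences_commuting_pair (G : groupType) :
  bounded_centralizer_sequences G ->
  exists N, forall a b : 'I_N.+1 -> G,
    (forall i j, commute (a i) (a j)) ->
    (forall j k : 'I_N.+1, j < k -> commute (a j) (b k)) ->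
    exists k, commute (a k) (b k).
Proof.
case=> N boundN; exists N => a b aC abC; apply: NNPP => noC.
pose P i x := exists2 j : 'I_N.+1, j < i & x = a j.
apply: (boundN P) => [i _ _ _ [j _ ->] [l _ ->] | i _ _ [j ji ->] | i iN].
- exact: aC.
- by exists j; first exact: ltnW.
- split=> [g Cg _ [j ji ->] | ].
    by apply: Cg; exists j; first exact: ltnW.
  pose k : 'I_N.+1 := @Ordinal N.+1 i (ltnW (ltnW iN)).
  exists (b k); split=> [_ [j jk ->] | Ck].
    exact/commute_sym/abC.
  by apply: noC; exists k; apply/commute_sym/Ck; exists k.
Qed.

Lemma normalize_reduced_id w : reduced w -> normalize w = w.
Proof.
elim: w => [|a w IH] //= Hw.
rewrite IH; last exact: (path_sorted Hw).
case: w Hw {IH} => [|b w] //= /andP [Hab _].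
by rewrite (negbTE Hab).
Qed.

Lemma fmul1f u : fmul fone u = u.
Proof. by case: u => w Hw; apply: val_inj; exact: normalize_reduced_id. Qed.

Lemma fmulf1 u : fmul u fone = u.
Proof.
by case: u => w Hw; apply: val_inj; rewrite /= cats0; exact: normalize_reduced_id.
Qed.

Definition gen (n : nat) (b : bool) : FreeGroup := exist _ [:: (n, b)] isT.

Lemma fmul_gen_inv n b : fmul (gen n b) (gen n (~~ b)) = fone.
Proof. by apply: val_inj; rewrite /= /cancels /= eqxx; case: b. Qed.

Lemma comm_g1g2E :
  comm_g1g2 = fmul (fmul (fmul (gen 0 true) (gen 1 true)) (gen 0 false)) (gen 1 false).
Proof. by apply: val_inj. Qed.

Lemma incl_mul N (k : 'I_N) u v :
  pow_mul (incl k u) (incl k v) = incl k (fmul u v).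
Proof.
apply: functional_extensionality => i; rewrite /pow_mul /incl.
by case: (i == k); rewrite ?fmulf1.
Qed.

Lemma incl_commute N (j k : 'I_N) u v : j != k ->
  pow_mul (incl j u) (incl k v) = pow_mul (incl k v) (incl j u).
Proof.
move=> jk; apply: functional_extensionality => i; rewrite /pow_mul /incl.
case: (i =P j) => [->|_]; first by rewrite (negbTE jk) fmulf1 fmul1f.
by case: (i =P k) => _; rewrite ?fmulf1 ?fmul1f.
Qed.

Section HomIncl.
Variables (G : groupType) (N : nat) (rho : FreePow N -> G).
Hypothesis rhoM : is_hom rho.

Lemma hom_incl1 k : rho (incl k fone) = 1.
Proof.
apply: (@mulIg _ (rho (incl k fone))).
by rewrite mul1g -rhoM incl_mul fmulf1.
Qed.

Lemma hom_inclV k u v : fmul u v = fone -> rho (incl k v) = (rho (incl k u))^-1.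
Proof.
move=> uv1; apply/esym/mulg1_eq.
by rewrite -rhoM incl_mul uv1 hom_incl1.
Qed.

Lemma hom_incl_commute j k u v : j != k ->
  commute (rho (incl j u)) (rho (incl k v)).
Proof. by move=> jk; rewrite /commute -!rhoM incl_commute. Qed.

Lemma hom_incl_comm_g1g2 k :
  let a := rho (incl k (gen 0 true)) in let b := rho (incl k (gen 1 true)) in
  rho (incl k comm_g1g2) = a * b * a^-1 * b^-1.
Proof.
rewrite comm_g1g2E -!incl_mul !rhoM.
by rewrite (hom_inclV _ (fmul_gen_inv 0 true)) (hom_inclV _ (fmul_gen_inv 1 true)).
Qed.

End HomIncl.

Theorem lemma3p3 (G : groupType) :
  bounded_centralizer_sequences G -> weak_identity G comm_g1g2.
Proof.
move=> /bounded_centralizer_sequences_commuting_pair [N commuting_pair].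
exists N.+1; split=> // rho rhoM.
pose a k := rho (incl k (gen 0 true)); pose b k := rho (incl k (gen 1 true)).
have [k abC] : exists k, commute (a k) (b k).
  apply: commuting_pair => [i j | j k jk].
    case: (eqVneq i j) => [->|ij]; first exact: commute_refl.
    exact: (hom_incl_commute rhoM).
  by apply: (hom_incl_commute rhoM); rewrite neq_ltn jk.
by exists k; rewrite hom_incl_comm_g1g2 // -/(a k) -/(b k) abC mulgK mulgV.
Qed.
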